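(* Let $a,b$ be positive integers with $1<b/a\le 2$, and let $c$ be the remainder upon division of $a$ by $b-a$ (so $0\le c<b-a$). Let $V=\langle 1,u^c,u^{b-a}\rangle\subset S_{b-a}$. Then $\mu_V(W)\ge b/a$ for every nonzero linear subspace $W\subset S_{a-1}$.
   Context: Over $\mathbb{C}$, $S_a$ denotes the space of polynomials in one variable $u$ of degree at most $a$. For subspaces $V,W$, $V\cdot W$ is the span of products $fg$ ($f\in V$, $g\in W$), and for nonzero $W\subset S_{a-1}$, $\mu_V(W)=\dim(V\cdot W)/\dim W$. *)

From HB Require Import structures.
From mathcomp Require Import all_boot all_order all_algebra.
Set Implicit Arguments. Unset Strict Implicit. Unset Printing Implicit Defensive.
Import Order.TTheory GRing.Theory Num.Theory.
Local Open Scope ring_scope.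

(* S_k = polynomials of degree at most k = {poly_(k.+1) F} (size <= k+1),
   a finite dimensional vector space (qpoly.v). *)
Notation S F k := {poly_(k.+1) F}.

(* The product V . W of subspaces V of {poly_m F} and W of {poly_n F}:
   the span of all products f*g, f in V, g in W, viewed inside
   {poly_(m+n).-1 F} (polynomials of degree at most (m-1)+(n-1)).
   By bilinearity it is spanned by the products of basis vectors. *)
Definition prodsp (F : fieldType) (m n : nat)
    (V : {vspace {poly_m F}}) (W : {vspace {poly_n F}})
    : {vspace {poly_(m + n).-1 F}} :=
  <<[seq npolyp (m + n).-1 (val f * val g) | f <- vbasis V, g <- vbasis W]>>%VS.

Definition mu (F : fieldType) (m n : nat)
    (V : {vspace {poly_m F}}) (W : {vspace {poly_n F}}) : rat :=
  (\dim (prodsp V W))%:R / (\dim W)%:R.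

Definition Vsp (F : fieldType) (c k : nat) : {vspace S F k} :=
  <<[:: npolyp k.+1 1; npolyp k.+1 'X^c; npolyp k.+1 'X^k]>>%VS.

(* A subspace of polynomials has as many dimensions as its elements have
   distinct degrees.  If D, a subset of [0, a), is the set of degrees of W, then
   V.W has elements of every degree in D, D + c and D + k, where k = b - a; so it
   suffices that this union has at least (a + k)/a |D| elements.  Sort degrees by
   residue mod k: the class of r meets [0, a) in h(r) = a/k + [r < c] points,
   translating by k adds a new point to every nonempty class, and translating by
   c maps the class of r - c into the class of r.  With the potential
   psi(r) = r if D fills its class r and psi(r) = k otherwise, the counts d(r)
   of D and m(r) of the union in class r satisfy
   (a + k) d(r) <= a m(r) + psi(r - c) - psi(r), and the psi terms
   cancel when summed around the permutation r |-> r - c of residues. *)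

From HB Require Import structures.
From mathcomp Require Import all_boot all_order all_algebra zify.
From mathcomp Require Import boolp.
Import Order.TTheory GRing.Theory Num.Theory.
Set Implicit Arguments. Unset Strict Implicit. Unset Printing Implicit Defensive.

Lemma sum_residues (f : nat -> nat) k n :
  \sum_(e < n * k) f e = \sum_(r < k) \sum_(j < n) f (r + j * k).
Proof.
elim: n => [|n IH]; first by rewrite mul0n big_ord0 big1 // => r _; rewrite big_ord0.
rewrite mulSnr big_split_ord /= IH.
under [RHS]eq_bigr do rewrite big_ord_recr /=.
by rewrite big_split /=; congr (_ + _); apply: eq_bigr => r _; rewrite addnC.
Qed.

Lemma sum_pred_widen (p : pred nat) m M :
  m <= M -> (forall e, p e -> e < m) -> \sum_(e < m) p e = \sum_(e < M) p e.
Proof.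
move=> le_mM p_lt; rewrite (big_ord_widen M (fun e => nat_of_bool (p e)) le_mM).
rewrite big_mkcond /=; apply: eq_bigr => e _; case: ltnP => // le_me.
by case: (boolP (p e)) => // /p_lt; rewrite ltnNge le_me.
Qed.

Lemma sum_ltn h N : h <= N -> \sum_(j < N) (j < h) = h.
Proof.
move=> le_hN; have := @big_ord_widen _ 0 addn h N (fun=> 1) le_hN.
rewrite big_const_ord iter_addn_0 mul1n big_mkcond /= => {2}->.
by apply: eq_bigr => j _; case: (j < h).
Qed.

Lemma sum_mod_shift (g : nat -> nat) k t : 0 < k ->
  \sum_(r < k) g ((r + t) %% k) = \sum_(r < k) g r.
Proof.
move=> k_gt0; pose sh (r : 'I_k) : 'I_k := Ordinal (ltn_pmod (r + t) k_gt0).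
have sh_inj : injective sh.
  move=> x y /(congr1 val) /= /eqP; rewrite eqn_modDr !modn_small // => /eqP.
  exact: val_inj.
by rewrite [RHS](reindex_inj sh_inj).
Qed.

(* The boundary term [p n] accounts for a last element of [p] whose successor
   falls outside the window. *)
Lemma sum_succ_union (p s : pred nat) :
  (forall j, p j -> s j) -> (forall j, p j -> s j.+1) -> forall n,
  \sum_(j < n.+1) p j + (0 < \sum_(j < n.+1) p j) <= \sum_(j < n.+1) s j + p n.
Proof.
move=> ps ps1; elim=> [|n IH]; first by rewrite !big_ord1; case: (p 0) (ps 0) => // ->.
rewrite [X in X + _ <= _]big_ord_recr [X in _ <= X + _]big_ord_recr /=.
rewrite [in X in _ + X <= _]big_ord_recr /=.
move: IH (ps n.+1) (ps1 n).
set X := \sum_(i < n.+1) p i; set Y := \sum_(i < n.+1) s i.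
have Xpos : p n -> 0 < X by rewrite /X big_ord_recr /= => ->; rewrite addn1.
move: Xpos; case: (p n); case: (p n.+1); case: (s n.+1) => //= Xpos; lia.
Qed.

Definition shift_union (c k : nat) (P : pred nat) : pred nat :=
  fun s => [|| P s, (c <= s) && P (s - c) | (k <= s) && P (s - k)].

Section ShiftUnion.
Variables (a k : nat) (P : pred nat).
Hypotheses (k_gt0 : 0 < k) (k_le_a : k <= a) (P_lt_a : forall e, P e -> e < a).

Let c := a %% k.
Let q := a %/ k.
Local Notation S := (shift_union c k P).
(* Enough blocks of length k for every residue class to leave [0, a + k). *)
Local Notation N := a.+2.

Let class_count (Q : pred nat) r := \sum_(j < N) Q (r + j * k).
Let height r := q + (r < c).
Let rot r := (r + (k - c)) %% k.

Let a_eq : a = q * k + c. Proof. exact: divn_eq. Qed.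
Let c_lt_k : c < k. Proof. exact: ltn_pmod. Qed.
Let q_gt0 : 0 < q. Proof. by rewrite divn_gt0. Qed.
Let q_le_a : q <= a. Proof. exact: leq_div. Qed.

Lemma shift_union_lt s : S s -> s < a + k.
Proof.
by case/or3P=> [/P_lt_a|/andP[_ /P_lt_a]|/andP[_ /P_lt_a]]; lia.
Qed.

Lemma class_count_le_height r : r < k -> class_count P r <= height r.
Proof.
move=> r_lt_k; rewrite -[leqRHS](@sum_ltn (height r) N) /height; last lia.
apply: leq_sum => j _; case Pj: (P _) => //; have lt_a := P_lt_a Pj.
rewrite lt0b -(ltn_pmul2r k_gt0) /height mulnDl.
by case: (ltnP r c); rewrite /= ?mul1n ?mul0n; lia.
Qed.

Lemma class_count_shift_k r :
  class_count P r + (0 < class_count P r) <= class_count S r.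
Proof.
have P_top : P (r + N.-1 * k) = false by apply/negP => /P_lt_a; nia.
have := @sum_succ_union (fun j => P (r + j * k)) (fun j => S (r + j * k)) _ _ N.-1.
rewrite P_top addn0; apply => j Pj; apply/or3P.
  by apply: Or31.
apply: Or33; rewrite mulSnr addnA addnK Pj; lia.
Qed.

Lemma rotE r : r < k -> rot r = if c <= r then r - c else r + (k - c).
Proof.
move=> r_lt_k; case: ifP => c_le_r.
  by rewrite /rot (_ : r + (k - c) = r - c + k) ?modnDr ?modn_small //; lia.
by rewrite /rot modn_small //; lia.
Qed.

Lemma class_count_shift_c r : r < k -> class_count P (rot r) <= class_count S r.
Proof.
move=> r_lt_k; rewrite rotE //; case: ifP => c_le_r.
  apply: leq_sum => j _; case Pj: (P _) => //=; rewrite lt0b; apply/or3P/Or32.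
  by rewrite (_ : r + j * k - c = r - c + j * k) ?Pj ?andbT; lia.
rewrite /class_count big_ord_recr /= [in leqRHS]big_ord_recl /=.
have -> : P (r + (k - c) + N.-1 * k) = false by apply/negP => /P_lt_a; nia.
rewrite addn0 (leq_trans _ (leq_addl _ _)) //.
apply: leq_sum => j _; case Pj: (P _) => //=; rewrite lt0b; apply/or3P/Or32.
rewrite /bump /= add1n mulSnr.
by rewrite (_ : r + (j * k + k) - c = r + (k - c) + j * k) ?Pj ?andbT; lia.
Qed.

Let potential r := if class_count P r == height r then r else k.

Lemma potential_step r : r < k ->
  potential r + (a + k) * class_count P r <= a * class_count S r + potential (rot r).
Proof.
move=> r_lt_k; have rot_lt_k : rot r < k by apply: ltn_pmod.
move: (rotE r_lt_k) (class_count_shift_k r) (class_count_shift_c r_lt_k).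
move: (class_count_le_height r_lt_k) (class_count_le_height rot_lt_k).
rewrite /potential /height.
move: (class_count P r) (class_count P (rot r)) (class_count S r) => D E M Dh Eh rotr Dk Dc.
have aDk : 0 < D -> a * D + a <= a * M.
  by move=> D_gt0; move: Dk; rewrite D_gt0 addn1 addnC -mulnS leq_mul2l => ->; rewrite orbT.
have aDc : a * E <= a * M by rewrite leq_mul2l Dc orbT.
have aq : a <= a * q by rewrite leq_pmulr.
have kD : D < q + (r < c) -> k * D + k <= k * (q + (r < c)).
  by move=> D_lt; rewrite addnC -mulnS leq_mul2l D_lt orbT.
move: Dh Eh kD rotr; case: (ltnP r c) => rc; case: (ltnP (rot r) c) => rotc /=;
  rewrite ?addn0 ?addn1 => Dh Eh kD rotr;
  case: eqP => [D_full|/eqP D_part]; case: eqP => [E_full|/eqP E_part].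
all: rewrite ?D_full ?E_full in aDk aDc kD *; lia.
Qed.

Lemma shift_union_count : (a + k) * \sum_(e < a) P e <= a * \sum_(s < a + k) S s.
Proof.
have P_block : \sum_(e < a) P e = \sum_(e < N * k) P e.
  by apply: sum_pred_widen P_lt_a; nia.
have S_block : \sum_(s < a + k) S s = \sum_(s < N * k) S s.
  by apply: sum_pred_widen shift_union_lt; nia.
rewrite P_block S_block (sum_residues (fun e => nat_of_bool (P e))).
rewrite (sum_residues (fun s => nat_of_bool (S s))) !big_distrr /=.
have : \sum_(r < k) (potential r + (a + k) * class_count P r) <=
        \sum_(r < k) (a * class_count S r + potential (rot r)).
  by apply: leq_sum => r _; apply: potential_step.
by rewrite !big_split /= /rot sum_mod_shift // addnC leq_add2r.
Qed.

End ShiftUnion.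

Local Open Scope ring_scope.

Section DegreeProfile.
Variables (F : fieldType) (n : nat).
Implicit Types U : {vspace {poly_n F}}.

Definition has_deg U (e : nat) : bool :=
  `[< exists2 u, u \in U & size (val u) = e.+1 >].

Definition coefv (m : nat) : 'Hom({poly_n F}, F^o) :=
  linfun (coefp m \o @polyn F n : {poly_n F} -> F^o).

Lemma coefvE m (p : {poly_n F}) : coefv m p = (val p)`_m.
Proof. by rewrite lfunE. Qed.

Lemma has_deg_subv U U' e : (U <= U')%VS -> has_deg U e -> has_deg U' e.
Proof.
by move=> sUU' /asboolP[u uU su]; apply/asboolP; exists u => //; apply: (subvP sUU').
Qed.

Lemma dimv_sum_has_deg m U : {in U, forall u : {poly_n F}, size (val u) <= m}%N ->
  \dim U = (\sum_(e < m) has_deg U e)%N.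
Proof.
elim: m U => [|m IH] U sizeU.
  rewrite big_ord0; apply/eqP; rewrite dimv_eq0 -subv0; apply/subvP => u uU.
  by rewrite memv0 -(inj_eq val_inj) -size_poly_eq0 -leqn0 sizeU.
have topcoef u : u \in U -> ((val u)`_m != 0) = (size (val u) == m.+1).
  move=> uU; have := sizeU u uU; rewrite leq_eqVlt ltnS => /orP[/eqP su|su].
    have -> : (val u)`_m = lead_coef (val u) by rewrite lead_coefE su.
    by rewrite lead_coef_eq0 -size_poly_eq0 su eqxx.
  by rewrite nth_default // eqxx ltn_eqF.
set U' := (U :&: lker (coefv m))%VS.
have sizeU' : {in U', forall u : {poly_n F}, size (val u) <= m}%N.
  move=> u /memv_capP[uU]; rewrite memv_ker coefvE => /eqP um0.
  by rewrite -ltnS ltn_neqAle sizeU // andbT -topcoef // um0 eqxx.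
have degU' e : (e < m)%N -> has_deg U' e = has_deg U e.
  move=> em; apply/idP/idP; first exact: has_deg_subv (capvSl _ _).
  case/asboolP=> u uU su; apply/asboolP; exists u => //.
  by rewrite memv_cap uU memv_ker coefvE nth_default ?eqxx // su.
rewrite big_ord_recr /= -(limg_ker_dim (coefv m) U) -/U' (IH U' sizeU').
congr (_ + _)%N; first by apply: eq_bigr => e _; rewrite degU'.
have dim_le1 : (\dim (coefv m @: U) <= 1)%N.
  by rewrite (leq_trans (dimvS (subvf _))) // dimvf.
case: (boolP (has_deg U m)) => [/asboolP[u uU su] | no_deg_m].
  apply/eqP; rewrite eqn_leq dim_le1 lt0n dimv_eq0; apply/eqP => img0.
  have : coefv m u \in (coefv m @: U)%VS by apply: memv_img.
  by rewrite img0 memv0 coefvE; apply/negP; rewrite topcoef // su.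
apply/eqP; rewrite dimv_eq0 -subv0; apply/subvP => _ /memv_imgP[u uU ->].
rewrite memv0 coefvE; apply: contraR no_deg_m; rewrite topcoef // => /eqP su.
by apply/asboolP; exists u.
Qed.

Lemma dimv_npoly U : \dim U = (\sum_(e < n) has_deg U e)%N.
Proof. by apply: dimv_sum_has_deg => u _; apply: size_npoly. Qed.
End DegreeProfile.

Section ProductSpace.
Variable F : fieldType.

Fact npolyp_is_linear N : linear (npolyp N : {poly F} -> {poly_N F}).
Proof.
move=> x p q; apply/npolyP => i /=.
by rewrite !(coefD, coefZ, coef_npolyp); case: ifP; rewrite ?mulr0 ?addr0.
Qed.

HB.instance Definition _ N :=
  GRing.isLinear.Build F {poly F} {poly_N F} _ (npolyp N) (npolyp_is_linear N).

Lemma prodsp_mul m n (V : {vspace {poly_m F}}) (W : {vspace {poly_n F}}) f g :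
  f \in V -> g \in W -> npolyp (m + n).-1 (val f * val g) \in prodsp V W.
Proof.
move=> fV gW; rewrite (coord_vbasis fV) (coord_vbasis gW) !linear_sum /=.
rewrite mulr_suml linear_sum; apply: memv_suml => i _.
rewrite mulr_sumr linear_sum; apply: memv_suml => j _.
rewrite -scalerAl -scalerAr !linearZ; apply/memvZ/memvZ/memv_span.
by apply: (allpairs_f (fun f g => npolyp _ (val f * val g))); apply: mem_nth; rewrite size_tuple.
Qed.

Lemma prodsp_mulX m n (V : {vspace {poly_m F}}) (W : {vspace {poly_n F}}) v i e :
  v \in V -> val v = 'X^i -> has_deg W e -> has_deg (prodsp V W) (i + e).
Proof.
move=> vV vX /asboolP[w wW sw]; apply/asboolP.
exists (npolyp (m + n).-1 (val v * val w)); first exact: prodsp_mul.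
have i_lt_m : (i < m)%N by have := size_npoly v; rewrite vX size_polyXn.
have e_lt_n : (e < n)%N by rewrite -sw size_npoly.
have w_neq0 : val w != 0 by rewrite -size_poly_eq0 sw.
have sz : size (val v * val w) = (i + e).+1 by rewrite vX mulrC size_mulXn // sw addnS.
by rewrite /= npolypK sz //; lia.
Qed.

End ProductSpace.

Lemma Vsp_npolyX (F : fieldType) c k i :
  i \in [:: 0%N; c; k] -> npolyp k.+1 'X^i \in Vsp F c k.
Proof.
by rewrite !inE => /or3P[]/eqP->; apply: memv_span; rewrite ?expr0 !inE eqxx ?orbT.
Qed.

Lemma has_deg_prodsp_Vsp (F : fieldType) c k n (W : {vspace {poly_n F}}) s :
  (c <= k)%N -> shift_union c k (has_deg W) s -> has_deg (prodsp (Vsp F c k) W) s.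
Proof.
move=> c_le_k; have shift i e : has_deg W e -> i \in [:: 0%N; c; k] ->
    has_deg (prodsp (Vsp F c k) W) (i + e).
  move=> D_e i_in; apply: prodsp_mulX (Vsp_npolyX F i_in) _ D_e; apply: npolypK.
  by rewrite size_polyXn ltnS; move: i_in; rewrite !inE => /or3P[]/eqP->.
case/or3P => [D_s | /andP[le_cs D_sc] | /andP[le_ks D_sk]].
- by rewrite -[s]add0n; apply: (shift _ _ D_s); rewrite inE eqxx.
- by rewrite -(subnKC le_cs); apply: (shift _ _ D_sc); rewrite !inE eqxx orbT.
- by rewrite -(subnKC le_ks); apply: (shift _ _ D_sk); rewrite !inE eqxx !orbT.
Qed.

Lemma mu_ge_ratio (F : fieldType) m n (V : {vspace {poly_m F}}) (W : {vspace {poly_n F}})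
    (a b : nat) :
  (0 < a)%N -> W != 0%VS -> (b * \dim W <= a * \dim (prodsp V W))%N ->
  (b%:R / a%:R : rat) <= mu V W.
Proof.
move=> a_gt0 W_neq0 le_ba; have dimW_gt0 : (0 < \dim W)%N by rewrite lt0n dimv_eq0.
rewrite /mu ler_pdivrMr ?ltr0n // mulrAC ler_pdivlMr ?ltr0n //.
by rewrite -!natrM ler_nat [X in (_ <= X)%N]mulnC.
Qed.

Theorem mainTheorem5 (F : closedFieldType) (hchar : [pchar F] =i pred0)
    (a b : nat) (ha : (0 < a)%N) (hb : (0 < b)%N)
    (hab : 1 < (b%:R / a%:R : rat)) (hb2 : (b%:R / a%:R : rat) <= 2)
    (W : {vspace {poly_a F}}) (hW : W != 0%VS) :
  let c := (a %% (b - a))%N in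
  (b%:R / a%:R : rat) <= mu (Vsp F c (b - a)) W.
Proof.
cbv zeta; have a_lt_b : (a < b)%N.
  by move: hab; rewrite ltr_pdivlMr ?ltr0n // mul1r ltr_nat.
have b_le_2a : (b <= 2 * a)%N.
  by move: hb2; rewrite ler_pdivrMr ?ltr0n // -natrM ler_nat mulnC.
set k := (b - a)%N; have k_gt0 : (0 < k)%N by rewrite subn_gt0.
have k_le_a : (k <= a)%N by rewrite /k; lia.
have deg_lt_a e : has_deg W e -> (e < a)%N by case/asboolP=> w _ <-; apply: size_npoly.
have b_eq : b = (a + k)%N by rewrite /k; lia.
apply: mu_ge_ratio => //; rewrite (dimv_npoly W) (dimv_npoly (prodsp _ W)) b_eq.
apply: leq_trans (shift_union_count k_gt0 k_le_a deg_lt_a) _.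
have le_ak : (a + k <= (k.+1 + a).-1)%N by rewrite addnC.
rewrite (sum_pred_widen le_ak (shift_union_lt k_gt0 k_le_a deg_lt_a)) leq_mul2l.
apply/orP; right; apply: leq_sum => s _.
case S_s: (shift_union _ _ _ s) => //; rewrite lt0b.
by apply: has_deg_prodsp_Vsp S_s; rewrite ltnW // ltn_pmod.
Qed.
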